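(* Let $t\ge1$ be an integer, $\varepsilon\in(0,\frac12)$, and $q=\frac{88t}{\varepsilon}$ (assumed to be an integer). Suppose $f:\{0,1\}^d\to\{0,1\}$ is $\varepsilon$-far from linear, and let $x_1,\dots,x_q$ be sampled uniformly and independently from $\{0,1\}^d$. Let $Y$ be the number of pairs $(i,j)\in[q]^2$ with $i<j$ such that $f(x_i)+f(x_j)\neq f(x_i\oplus x_j)$ (mod 2). Then $\Pr\big[Y\le\frac\varepsilon4\binom q2\big]\le 0.25$.
   Context: $\oplus$ denotes bitwise XOR. $f:\{0,1\}^d\to\{0,1\}$ is linear if there is $S\subseteq[d]$ with $f(x)=\sum_{i\in S}x[i]\bmod 2$; $f$ is $\varepsilon$-far from linear if it differs from every linear function on at least an $\varepsilon$ fraction of $\{0,1\}^d$. *)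

From mathcomp Require Import all_boot all_order all_algebra.
Set Implicit Arguments. Unset Strict Implicit. Unset Printing Implicit Defensive.
Import Order.TTheory GRing.Theory Num.Theory.

Definition cube (d : nat) := {ffun 'I_d -> bool}.

Definition bxor (d : nat) (x y : cube d) : cube d := [ffun i => x i (+) y i].

Definition linfun (d : nat) (S : {set 'I_d}) (x : cube d) : bool :=
  \big[addb/false]_(i in S) x i.

Definition is_linear (d : nat) (f : cube d -> bool) : Prop :=
  exists S : {set 'I_d}, forall x, f x = linfun S x.

Local Open Scope ring_scope.

Definition frac_diff (R : numFieldType) (d : nat) (f g : cube d -> bool) : R :=
  #|[set x : cube d | f x != g x]|%:R / #|{: cube d}|%:R.

Definition far_from_linear (R : numFieldType) (eps : R) (d : nat)
  (f : cube d -> bool) : Prop :=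
  forall g : cube d -> bool, is_linear g -> eps <= frac_diff R f g.

Definition violations (d q : nat) (f : cube d -> bool) (xs : 'I_q -> cube d) : nat :=
  #|[set p : 'I_q * 'I_q | (p.1 < p.2)%N &&
      ((f (xs p.1) (+) f (xs p.2)) != f (bxor (xs p.1) (xs p.2)))]|.

(* probability, under x_1..x_q uniform and independent on {0,1}^d
   (i.e. uniform over {ffun 'I_q -> cube d}), of an event *)
Definition prob_samples (R : numFieldType) (d q : nat)
  (E : pred {ffun 'I_q -> cube d}) : R :=
  #|[set xs : {ffun 'I_q -> cube d} | E xs]|%:R / #|{: {ffun 'I_q -> cube d}}|%:R.

From Pilot Require Import Defs.
From mathcomp Require Import all_boot all_order all_algebra.
From mathcomp Require Import ring lra.
Set Implicit Arguments. Unset Strict Implicit. Unset Printing Implicit Defensive.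
Import Order.TTheory GRing.Theory Num.Theory.
Local Open Scope ring_scope.

(* Write N = 2^d, V for the number of pairs (x, y) of the cube on which the
   test f(x) + f(y) = f(x xor y) fails, and p = V / N^2 for the rejection
   probability of a single test.
   1. Fourier analysis over the cube (characters chi_S = (-1)^{linfun S}):
      orthogonality gives inversion and Parseval, and the BLR statistic
      sum_{x,y} (-1)^{f x + f y + f (x xor y)} equals N^-1 sum_S fhat(S)^3.
      Since every coefficient is at most (1 - 2 eps) N when f is eps-far from
      linear, this yields the BLR theorem p >= eps.
   2. Uniform independent samples: prescribing distinct coordinates of a
      uniform sample xs in T^q divides the count by |T| per coordinate, so
      the tests on two pairs of sample indices are independent as soon as the
      pairs are disjoint.
   3. Hence E[Y] = C(q,2) p and, since a pair overlaps at most 4q pairs,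
      E[Y^2] <= (C(q,2) p)^2 + 4 q C(q,2) p.
   4. Chebyshev's inequality (in counting form) and the arithmetic
      q eps >= 88 bound Pr[Y <= eps/4 C(q,2)] by 1/4. *)

Section Characters.
Variables (R : comNzRingType) (d : nat).
Implicit Types (a b : bool) (x y : cube d) (S : {set 'I_d}) (f : cube d -> bool).

(* The +-1 encoding (-1)^b of a bit: it turns XOR into multiplication. *)
Definition sign b : R := if b then -1 else 1.

Lemma signD a b : sign (a (+) b) = sign a * sign b.
Proof. by case: a; case: b; rewrite /sign ?mulrN ?mulNr ?mulr1 ?opprK. Qed.

Lemma sign_sqr b : sign b * sign b = 1.
Proof. by case: b; rewrite /sign ?mulrNN mulr1. Qed.

Lemma sign_nat b : sign b = 1 - 2 * b%:R.
Proof. by case: b; rewrite /sign /= ?mulr0 ?subr0 // mulr1; ring. Qed.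

Lemma linfun_bxor S x y : Defs.linfun S (bxor x y) = Defs.linfun S x (+) Defs.linfun S y.
Proof. by rewrite /Defs.linfun -big_split; apply: eq_bigr => i _; rewrite ffunE. Qed.

Definition chi S x : R := sign (Defs.linfun S x).

Lemma chi_prod S x : chi S x = \prod_(i in S) sign (x i).
Proof. exact: (big_morph sign signD). Qed.

Lemma chi_bxor S x y : chi S (bxor x y) = chi S x * chi S y.
Proof. by rewrite /chi linfun_bxor signD. Qed.

Lemma sum_subsets_prod (c : 'I_d -> R) :
  \sum_(S : {set 'I_d}) \prod_(i in S) c i = \prod_(i < d) (1 + c i).
Proof.
have -> : \prod_(i < d) (1 + c i) = \prod_(i < d) \sum_(b : bool) (if b then c i else 1).
  by apply: eq_bigr => i _; rewrite big_bool /= addrC.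
rewrite bigA_distr_bigA /= (reindex (fun g : {ffun 'I_d -> bool} => [set i | g i])).
  by apply: eq_bigr => g _; rewrite big_mkcond; apply: eq_bigr => i _; rewrite inE.
exists (fun S : {set 'I_d} => [ffun i => i \in S]) => [g _ | S _].
  by apply/ffunP => i; rewrite ffunE inE.
by apply/setP => i; rewrite inE ffunE.
Qed.

Lemma sum_chi x y :
  \sum_S chi S x * chi S y = if x == y then (2 ^ d)%:R else 0.
Proof.
under eq_bigr => S _ do rewrite !chi_prod -big_split /=.
rewrite sum_subsets_prod; case: eqP => [<- | /eqP neq_xy].
  under eq_bigr => i _ do rewrite sign_sqr.
  by rewrite prodr_const card_ord natrX.
have [i neq_i] : exists i, x i != y i.
  apply/existsP; apply: contraR neq_xy => /existsPn eq_xy.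
  by apply/eqP/ffunP => i; apply/eqP; rewrite -[_ == _]negbK eq_xy.
rewrite (bigD1 i) //=; move: neq_i; rewrite -signD.
by case: (x i); case: (y i) => //= _; rewrite /sign subrr mul0r.
Qed.

(* The (unnormalised) Fourier coefficient of (-1)^f at S. *)
Definition fourier f S : R := \sum_x sign (f x) * chi S x.

Lemma fourier_inversion f x :
  \sum_S fourier f S * chi S x = (2 ^ d)%:R * sign (f x).
Proof.
transitivity (\sum_y sign (f y) * \sum_S chi S y * chi S x).
  under eq_bigr => S _ do rewrite /fourier mulr_suml.
  rewrite exchange_big /=; apply: eq_bigr => y _; rewrite mulr_sumr.
  by apply: eq_bigr => S _; rewrite mulrA.
under eq_bigr => y _ do rewrite sum_chi.
rewrite (bigD1 x) //= eqxx big1 ?addr0 1?mulrC // => y /negbTE ->.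
by rewrite mulr0.
Qed.

Lemma parseval f : \sum_S fourier f S ^+ 2 = (2 ^ d)%:R * (2 ^ d)%:R.
Proof.
transitivity (\sum_x (2 ^ d)%:R * (sign (f x) * sign (f x))).
  under eq_bigr => S _ do rewrite expr2 {2}/fourier mulr_sumr.
  rewrite exchange_big /=; apply: eq_bigr => x _.
  by under eq_bigr => S _ do rewrite mulrCA; rewrite -mulr_sumr fourier_inversion mulrCA.
under eq_bigr => x _ do rewrite sign_sqr mulr1.
by rewrite sumr_const card_ffun card_bool card_ord mulr_natr.
Qed.

Lemma blr_fourier f :
  (2 ^ d)%:R * \sum_x \sum_y sign (f x) * sign (f y) * sign (f (bxor x y))
  = \sum_S fourier f S ^+ 3.
Proof.
rewrite mulr_sumr.
transitivity (\sum_x \sum_y \sum_S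
   fourier f S * ((sign (f x) * chi S x) * (sign (f y) * chi S y))).
  apply: eq_bigr => x _; rewrite mulr_sumr; apply: eq_bigr => y _.
  rewrite mulrCA -fourier_inversion !mulr_sumr.
  by apply: eq_bigr => S _; rewrite chi_bxor; ring.
rewrite exchange_big /=; under eq_bigr => x _ do rewrite exchange_big /=.
rewrite exchange_big /=; apply: eq_bigr => S _.
rewrite exprS expr2 {2 3}/fourier big_distrlr /= mulr_sumr exchange_big /=.
by apply: eq_bigr => x _; rewrite mulr_sumr.
Qed.

End Characters.

Lemma card_natr_sum (R : nzRingType) (T : finType) (P : pred T) :
  (#|[set x | P x]|%:R : R) = \sum_x (P x)%:R.
Proof.
rewrite -sum1_card natr_sum big_mkcond /=; apply: eq_bigr => x _.
by rewrite inE; case: (P x).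
Qed.

Lemma card_cube d : #|{: cube d}| = (2 ^ d)%N.
Proof. by rewrite card_ffun card_bool card_ord. Qed.

Section BLR.
Variables (R : realFieldType) (d : nat) (f : cube d -> bool).
Local Notation N := ((2 ^ d)%:R : R).

Definition viol (x y : cube d) : bool := (f x (+) f y) != f (bxor x y).

Definition viol_count : R := \sum_x \sum_y (viol x y)%:R.

Lemma viol_count_ge0 : 0 <= viol_count.
Proof. by do 2!(apply: sumr_ge0 => ? _); rewrite ler0n. Qed.

(* Agreement with a linear function bounds the corresponding coefficient. *)
Lemma fourier_far_bound (eps : R) S :
  far_from_linear eps f -> fourier R f S <= N - 2 * eps * N.
Proof.
move=> /(_ (Defs.linfun S)) far_S.
have {far_S} : eps * N <= \sum_x (f x != Defs.linfun S x)%:R.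
  have N_gt0 : 0 < N by rewrite ltr0n expn_gt0.
  rewrite -ler_pdivlMr // -card_natr_sum -card_cube.
  by apply: far_S; exists S.
have -> : fourier R f S = N - 2 * \sum_x (f x != Defs.linfun S x)%:R.
  rewrite /fourier; under eq_bigr => x _ do rewrite /chi -signD sign_nat.
  rewrite sumrB sumr_const card_cube -mulr_sumr; congr (_ - _ * _).
  by apply: eq_bigr => x _; case: (f x); case: (Defs.linfun S x).
by rewrite -mulrA lerD2l lerN2 ler_pM2l.
Qed.

(* In sign form, each rejected pair contributes -1 instead of 1. *)
Lemma blr_sign_sum :
  \sum_x \sum_y sign R (f x) * sign R (f y) * sign R (f (bxor x y))
  = N * N - 2 * viol_count.
Proof.
have sum_N : N = \sum_(y : cube d) 1 by rewrite sumr_const card_cube.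
rewrite {1}sum_N mulr_suml /viol_count mulr_sumr -sumrB; apply: eq_bigr => x _.
rewrite mul1r {1}sum_N mulr_sumr -sumrB; apply: eq_bigr => y _.
by rewrite -!signD sign_nat /viol; case: (f x); case: (f y); case: (f (bxor x y)).
Qed.

Theorem blr_soundness (eps : R) :
  far_from_linear eps f -> eps * N * N <= viol_count.
Proof.
move=> far_f; have N_gt0 : 0 < N by rewrite ltr0n expn_gt0.
have cube_bound : \sum_S fourier R f S ^+ 3 <= \sum_S fourier R f S ^+ 2 * (N - 2 * eps * N).
  apply: ler_sum => S _; rewrite exprS mulrC ler_wpM2l ?sqr_ge0 //.
  exact: fourier_far_bound.
rewrite -blr_fourier blr_sign_sum -mulr_suml parseval in cube_bound.
have : N * N - 2 * viol_count <= N * (N - 2 * eps * N).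
  by rewrite -(ler_pM2l N_gt0) mulrA.
nra.
Qed.

End BLR.

Section UniformSamples.
Variables (R : comNzRingType) (T : finType) (q : nat).
Local Notation N := (#|T|%:R : R).
Local Notation samples := {ffun 'I_q -> T}.

Section FixedCoordinates.
Variables (n : nat) (sel : 'I_n -> 'I_q).
Hypothesis sel_inj : injective sel.

Lemma sum_coordinate_constraints (w : 'I_n -> T) (m : 'I_q) :
  \sum_(c : T) \prod_(r < n | sel r == m) ((c == w r)%:R : R)
  = if m \in codom sel then 1 else N.
Proof.
case: codomP => [[r ->] | no_r]; last first.
  rewrite -[N]/(1 *+ #|T|) -sumr_const; apply: eq_bigr => c _.
  by rewrite big_pred0 // => r; apply/negP => /eqP sel_r; apply: no_r; exists r.
have only_r c : \prod_(r' < n | sel r' == sel r) ((c == w r')%:R : R) = (c == w r)%:R.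
  by rewrite (eq_bigl (pred1 r)) ?big_pred1_eq // => r'; rewrite /= inj_eq.
under eq_bigr do rewrite only_r.
by rewrite (bigD1 (w r)) //= eqxx big1 ?addr0 // => c /negbTE ->.
Qed.

Lemma sum_fixed_coordinates (w : 'I_n -> T) :
  \sum_(xs : samples) \prod_(r < n) ((xs (sel r) == w r)%:R : R) * N ^+ n = N ^+ q.
Proof.
have group_by_coordinate (xs : samples) :
    \prod_(r < n) ((xs (sel r) == w r)%:R : R)
    = \prod_(m < q) \prod_(r < n | sel r == m) ((xs m == w r)%:R : R).
  rewrite (partition_big sel xpredT) //=; apply: eq_bigr => m _.
  by apply: eq_bigr => r /eqP ->.
under eq_bigr do rewrite group_by_coordinate.
rewrite -mulr_suml -(bigA_distr_bigA (fun m (c : T) =>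
  \prod_(r < n | sel r == m) ((c == w r)%:R : R))) /=.
under eq_bigr => m _ do rewrite sum_coordinate_constraints.
rewrite (eq_bigr (fun m => if m \notin codom sel then N else 1)); last first.
  by move=> m _; case: (m \in codom sel).
rewrite -big_mkcond /= prodr_const -exprD; congr (_ ^+ _).
have card_img : #|codom sel| = n by rewrite card_codom // card_ord.
by rewrite -[X in (_ + X)%N]card_img addnC cardC card_ord.
Qed.

Lemma sum_fixed_coordinates_lin (J : finType) (c : J -> R) (w : J -> 'I_n -> T) :
  \sum_(xs : samples)
     (\sum_k c k * \prod_(r < n) ((xs (sel r) == w k r)%:R : R)) * N ^+ n
  = N ^+ q * \sum_k c k.
Proof.
under eq_bigr do rewrite mulr_suml.
rewrite exchange_big mulr_sumr /=; apply: eq_bigr => k _.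
under eq_bigr do rewrite -mulrA.
by rewrite -mulr_sumr sum_fixed_coordinates mulrC.
Qed.

End FixedCoordinates.

Lemma sum_point_indicator (g : T -> T -> R) a b :
  \sum_(p : T * T) g p.1 p.2 * ((a == p.1)%:R * (b == p.2)%:R) = g a b.
Proof.
rewrite (bigD1 (a, b)) //= !eqxx !mulr1 big1 ?addr0 // => -[u v].
rewrite xpair_eqE negb_and => /orP[] /negbTE; rewrite eq_sym => ->.
  by rewrite mul0r mulr0.
by rewrite !mulr0.
Qed.

Lemma sum_two_coordinates (i j : 'I_q) (g : T -> T -> R) : i != j ->
  \sum_(xs : samples) g (xs i) (xs j) * N ^+ 2 = N ^+ q * \sum_a \sum_b g a b.
Proof.
move=> neq_ij.
have expand (xs : samples) : g (xs i) (xs j) = \sum_(p : T * T) g p.1 p.2 *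
    \prod_(r < 2) ((xs (tnth [tuple i; j] r) == tnth [tuple p.1; p.2] r)%:R : R).
  rewrite -(sum_point_indicator g); apply: eq_bigr => p _.
  by rewrite !big_ord_recl big_ord0 mulr1.
under eq_bigr do rewrite expand.
rewrite (sum_fixed_coordinates_lin _ (fun p : T * T => g p.1 p.2)); last first.
  by apply/tuple_uniqP; rewrite /= inE andbT.
by rewrite pair_big.
Qed.

Lemma sum_four_coordinates (i j k l : 'I_q) (g g' : T -> T -> R) :
  uniq [:: i; j; k; l] ->
  \sum_(xs : samples) g (xs i) (xs j) * g' (xs k) (xs l) * N ^+ 4
  = N ^+ q * ((\sum_a \sum_b g a b) * (\sum_a \sum_b g' a b)).
Proof.
move=> uniq_ijkl.
have expand (xs : samples) : g (xs i) (xs j) * g' (xs k) (xs l) =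
    \sum_(K : (T * T) * (T * T)) g K.1.1 K.1.2 * g' K.2.1 K.2.2 *
    \prod_(r < 4) ((xs (tnth [tuple i; j; k; l] r)
                    == tnth [tuple K.1.1; K.1.2; K.2.1; K.2.2] r)%:R : R).
  rewrite -(sum_point_indicator g) -(sum_point_indicator g') big_distrlr pair_big.
  by apply: eq_bigr => -[p p'] _; rewrite !big_ord_recl big_ord0 /=; ring.
under eq_bigr do rewrite expand.
rewrite (sum_fixed_coordinates_lin _
  (fun K : (T * T) * (T * T) => g K.1.1 K.1.2 * g' K.2.1 K.2.2)); last first.
  exact/tuple_uniqP.
congr (_ * _).
by rewrite [X in X * _]pair_big [X in _ * X]pair_big big_distrlr pair_big.
Qed.

End UniformSamples.

Section OrderedPairs.
Variable q : nat.
Implicit Types P Q : 'I_q * 'I_q.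

Lemma card_ordered_pairs : #|[pred P : 'I_q * 'I_q | (P.1 < P.2)%N]| = 'C(q, 2).
Proof.
rewrite -sum1_card -(pair_big_dep xpredT (fun i j : 'I_q => (i < j)%N) (fun _ _ => 1%N)).
rewrite (exchange_big_dep xpredT) //= -bin2_sum big_mkord; apply: eq_bigr => j _.
by rewrite -(big_ord_widen q (fun _ => 1%N) (ltnW (ltn_ord j))) sum1_card card_ord.
Qed.

Lemma sum_ordered_pairs_const (R : nzRingType) (K : R) :
  \sum_(P : 'I_q * 'I_q | (P.1 < P.2)%N) K = 'C(q, 2)%:R * K.
Proof. by rewrite sumr_const card_ordered_pairs mulr_natl. Qed.

Definition overlap P Q : bool :=
  ~~ [&& P.1 != Q.1, P.1 != Q.2, P.2 != Q.1 & P.2 != Q.2].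

Lemma disjoint_pairs_uniq P Q : (P.1 < P.2)%N -> (Q.1 < Q.2)%N -> ~~ overlap P Q ->
  uniq [:: P.1; P.2; Q.1; Q.2].
Proof.
move=> ltP ltQ; rewrite negbK => /and4P[n11 n12 n21 n22].
by rewrite /= !inE !negb_or n11 n12 n21 n22 !andbT -!(inj_eq val_inj) !ltn_eqF.
Qed.

Lemma sum_eq_fst (a : 'I_q) : (\sum_(Q : 'I_q * 'I_q) (a == Q.1))%N = q.
Proof.
rewrite -(pair_big xpredT xpredT (fun u (_ : 'I_q) => (a == u) : nat)) /=.
rewrite (bigD1 a) //= [X in (_ + X)%N]big1 => [|u ne_ua].
  by rewrite eqxx /= big_const_ord iter_addn_0 mul1n addn0.
by rewrite eq_sym (negbTE ne_ua) big1.
Qed.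

Lemma sum_eq_snd (a : 'I_q) : (\sum_(Q : 'I_q * 'I_q) (a == Q.2))%N = q.
Proof.
rewrite -(pair_big xpredT xpredT (fun (_ : 'I_q) v => (a == v) : nat)) /= exchange_big.
rewrite (bigD1 a) //= [X in (_ + X)%N]big1 => [|u ne_ua].
  by rewrite eqxx /= big_const_ord iter_addn_0 mul1n addn0.
by rewrite eq_sym (negbTE ne_ua) big1.
Qed.

Lemma card_overlapping P : (\sum_(Q : 'I_q * 'I_q) overlap P Q <= 4 * q)%N.
Proof.
apply: (@leq_trans (\sum_(Q : 'I_q * 'I_q)
  ((P.1 == Q.1) + (P.1 == Q.2) + (P.2 == Q.1) + (P.2 == Q.2)))%N).
  apply: leq_sum => Q _; rewrite /overlap.
  by case: (P.1 == Q.1); case: (P.1 == Q.2); case: (P.2 == Q.1); case: (P.2 == Q.2).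
by rewrite !big_split /= !sum_eq_fst !sum_eq_snd !mulSn mul0n addn0 !addnA.
Qed.

End OrderedPairs.

Section Moments.
Variables (R : realFieldType) (d q : nat) (f : cube d -> bool).
Local Notation N := (#|cube d|%:R : R).
Local Notation V := (viol_count R f).
Local Notation samples := {ffun 'I_q -> cube d}.
Implicit Types (P Q : 'I_q * 'I_q) (xs : samples).

Definition pair_viol P xs : R := (viol f (xs P.1) (xs P.2))%:R.

Definition rejections xs : R := \sum_(P : 'I_q * 'I_q | (P.1 < P.2)%N) pair_viol P xs.

Lemma violationsE xs : (violations f xs)%:R = rejections xs.
Proof.
rewrite /violations card_natr_sum /rejections [RHS]big_mkcond.
by apply: eq_bigr => P _ /=; case: ltnP.
Qed.

Lemma pair_viol_01 P xs : 0 <= pair_viol P xs <= 1.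
Proof. by rewrite /pair_viol; case: viol; rewrite ?ler01 ?lexx. Qed.

Lemma sum_pair_viol P : (P.1 < P.2)%N ->
  \sum_(xs : samples) pair_viol P xs * N ^+ 2 = N ^+ q * V.
Proof.
move=> ltP; rewrite (sum_two_coordinates (fun a b => (viol f a b)%:R)) //.
by rewrite -(inj_eq val_inj) ltn_eqF.
Qed.

Lemma first_moment :
  \sum_(xs : samples) rejections xs * N ^+ 2 = 'C(q, 2)%:R * (N ^+ q * V).
Proof.
under eq_bigr do rewrite mulr_suml.
by rewrite exchange_big /= -sum_ordered_pairs_const; apply: eq_bigr => P; apply: sum_pair_viol.
Qed.

(* Correlation of two tests: they are independent unless the pairs overlap. *)
Lemma pair_correlation P Q : (P.1 < P.2)%N -> (Q.1 < Q.2)%N ->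
  \sum_(xs : samples) pair_viol P xs * pair_viol Q xs * N ^+ 4
  <= N ^+ q * (V * V) + (overlap P Q)%:R * (N ^+ q * V * N ^+ 2).
Proof.
move=> ltP ltQ; have N_ge0 : 0 <= N by rewrite ler0n.
have [ov_PQ | disj_PQ] := boolP (overlap P Q); last first.
  rewrite mul0r addr0 (sum_four_coordinates (fun a b => (viol f a b)%:R)
    (fun a b => (viol f a b)%:R)) //.
  exact: disjoint_pairs_uniq.
have VV_ge0 : 0 <= N ^+ q * (V * V) by rewrite mulr_ge0 ?exprn_ge0 ?mulr_ge0 ?viol_count_ge0.
rewrite /= mulr1n mul1r -(sum_pair_viol ltP); apply: ler_wpDl VV_ge0 _.
rewrite mulr_suml; apply: ler_sum => xs _.
rewrite -[X in _ <= X]mulrA -exprD ler_wpM2r ?exprn_ge0 //.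
have /andP[vP0 vP1] := pair_viol_01 P xs; have /andP[vQ0 vQ1] := pair_viol_01 Q xs.
by rewrite -[X in _ <= X]mulr1 ler_wpM2l.
Qed.

Lemma second_moment :
  \sum_(xs : samples) rejections xs ^+ 2 * N ^+ 4
  <= 'C(q, 2)%:R * ('C(q, 2)%:R * (N ^+ q * (V * V)) + N ^+ q * V * N ^+ 2 * (4 * q%:R)).
Proof.
set B := N ^+ q * V * N ^+ 2.
have B_ge0 : 0 <= B by rewrite /B !mulr_ge0 ?exprn_ge0 ?viol_count_ge0 ?ler0n.
have -> : \sum_(xs : samples) rejections xs ^+ 2 * N ^+ 4
   = \sum_(P : 'I_q * 'I_q | (P.1 < P.2)%N) \sum_(Q : 'I_q * 'I_q | (Q.1 < Q.2)%N)
       \sum_(xs : samples) pair_viol P xs * pair_viol Q xs * N ^+ 4.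
  under eq_bigr => xs _ do rewrite expr2 /rejections big_distrlr /= mulr_suml.
  rewrite exchange_big /=; apply: eq_bigr => P _.
  by under eq_bigr => xs _ do rewrite mulr_suml; rewrite exchange_big.
rewrite -sum_ordered_pairs_const; apply: ler_sum => P ltP.
apply: le_trans (ler_sum _ (fun Q ltQ => pair_correlation ltP ltQ)) _.
rewrite big_split /= sum_ordered_pairs_const lerD2l -mulr_suml mulrC ler_wpM2l //.
apply: le_trans (_ : _ <= (\sum_(Q : 'I_q * 'I_q) overlap P Q)%:R) _.
  by rewrite natr_sum [X in _ <= X](bigID (fun Q => (Q.1 < Q.2)%N)) /= lerDl sumr_ge0.
by rewrite -natrM ler_nat card_overlapping.
Qed.

End Moments.

Lemma chebyshev_count (R : realFieldType) (T : finType) (Y : T -> R) (m s thr : R) :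
  \sum_x Y x = m * #|T|%:R -> \sum_x Y x ^+ 2 <= (m ^+ 2 + s) * #|T|%:R ->
  thr <= m -> #|[set x | Y x <= thr]|%:R * (m - thr) ^+ 2 <= s * #|T|%:R.
Proof.
move=> sum_Y sum_Y2 le_thr_m.
have variance : \sum_x (Y x - m) ^+ 2 <= s * #|T|%:R.
  have -> : \sum_x (Y x - m) ^+ 2 = \sum_x Y x ^+ 2 - 2 * m * \sum_x Y x + m ^+ 2 * #|T|%:R.
    rewrite mulr_sumr -sumrB mulr_natr -sumr_const -big_split /=.
    by apply: eq_bigr => x _; ring.
  rewrite sum_Y; lra.
apply: le_trans variance; rewrite card_natr_sum mulr_suml; apply: ler_sum => x _.
case: (boolP (Y x <= thr)) => [le_Y_thr | _]; last by rewrite mul0r sqr_ge0.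
by rewrite mul1r; nra.
Qed.

(* The final numerical estimate: with q eps >= 88, a deviation of 3/4 of
   the mean has probability at most 1/4. *)
Lemma tail_estimate (R : realFieldType) (q C M p eps B : R) :
  0 < eps -> eps < 1 / 2 -> 88 <= q * eps -> C * 2 = q * (q - 1) ->
  eps <= p -> 0 < M -> 0 <= B ->
  B * (C * p - eps / 4 * C) ^+ 2 <= 4 * q * C * p * M -> B / M <= 1 / 4.
Proof.
move=> eps_gt0 eps_lt qeps_ge C2 eps_le_p M_gt0 B_ge0 chebyshev.
have q_gt176 : 176 < q by nra.
have C_gt0 : 0 < C by nra.
have Cp_gt0 : 0 < C * p by nra.
have dev : (C * (3 / 4) * p) ^+ 2 <= (C * p - eps / 4 * C) ^+ 2.
  by rewrite ler_sqr ?nnegrE; nra.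
have bound_Cp : B * C * (9 / 16) * p <= 4 * q * M.
  rewrite -(ler_pM2r Cp_gt0); have := ler_wpM2l B_ge0 dev; nra.
have bound_q : B * (q - 1) * (9 / 16) * p <= 8 * M.
  have q_gt0 : 0 < q by lra.
  rewrite -(ler_pM2l q_gt0); nra.
have qp_ge : 87 <= (q - 1) * p by nra.
rewrite ler_pdivrMr //; nra.
Qed.

Lemma bin2_natr (R : nzRingType) q : 'C(q, 2)%:R * 2 = q%:R * (q%:R - 1) :> R.
Proof.
case: q => [|n]; first by rewrite !mul0r.
have bin2S : ('C(n.+1, 2) * 2 = n.+1 * n)%N.
  by have := bin_ffact n.+1 2; rewrite ffactnS ffactn1.
by rewrite -natrM bin2S natrM -natr1 addrK.
Qed.

Unset Implicit Arguments.

Theorem lemmaB2 (R : realFieldType) (t d q : nat) (eps : R) (f : cube d -> bool) :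
  (1 <= t)%N -> 0 < eps -> eps < 1 / 2 ->
  q%:R = 88 * t%:R / eps ->
  far_from_linear eps f ->
  prob_samples R
    (fun xs : {ffun 'I_q -> cube d} =>
       (violations f xs)%:R <= eps / 4 * ('C(q, 2))%:R)
  <= 1 / 4.
Proof.
move=> t_ge1 eps_gt0 eps_lt hq far_f.
set N : R := #|cube d|%:R; set C : R := 'C(q, 2)%:R.
set M : R := #|{: {ffun 'I_q -> cube d}}|%:R.
have N_gt0 : 0 < N by rewrite ltr0n card_cube expn_gt0.
have M_def : M = N ^+ q by rewrite /M card_ffun card_ord natrX.
set p := viol_count R f / N ^+ 2.
have Vp : viol_count R f = p * N ^+ 2 by rewrite divfK ?expf_neq0 ?gt_eqF.
have eps_le_p : eps <= p.
  rewrite -(ler_pM2r (exprn_gt0 2 N_gt0)) -Vp expr2 mulrA /N card_cube.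
  exact: blr_soundness.
have qeps : 88 <= q%:R * eps.
  by rewrite hq mulfVK ?gt_eqF // -[X in X <= _]mulr1 ler_pM2l // ler1n.
have first : \sum_(xs : {ffun 'I_q -> cube d}) rejections R f xs = C * p * M.
  apply: (mulIf (expf_neq0 2 (lt0r_neq0 N_gt0))).
  by rewrite mulr_suml first_moment Vp M_def; ring.
have second : \sum_(xs : {ffun 'I_q -> cube d}) rejections R f xs ^+ 2
    <= ((C * p) ^+ 2 + 4 * q%:R * C * p) * M.
  rewrite -(ler_pM2r (exprn_gt0 4 N_gt0)) mulr_suml.
  apply: (le_trans (second_moment R q f)).
  by rewrite Vp M_def le_eqVlt; apply/orP; left; apply/eqP; ring.
have thr_le : eps / 4 * C <= C * p by have := ler0n R 'C(q, 2); nra.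
rewrite /prob_samples -/M (eq_card (B := [set xs | rejections R f xs <= eps / 4 * C])).
  apply: tail_estimate eps_gt0 eps_lt qeps (bin2_natr R q) eps_le_p _ (ler0n _ _) _.
    by rewrite M_def exprn_gt0.
  exact: chebyshev_count first second thr_le.
by move=> xs; rewrite !inE violationsE.
Qed.
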